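(* Let $k$ be a positive integer and let $G$ be a $3$-graph with $\lambda(G)>\lambda(K_{k+1}^3)$, and let $\vec x$ be an optimal weight vector of $G$. Then every vertex $v\in V(G)$ whose link graph satisfies $\omega(G_v)\leq k$ has weight $x_v<\frac{1}{k+1}$.
   Context: For a $3$-graph $G$ on vertex set $[n]$ and $\vec x\in\Delta=\{\vec x\in[0,1]^n:\sum_i x_i=1\}$, put $\lambda(G,\vec x)=\sum_{e\in E(G)}\prod_{i\in e}x_i$ and $\lambda(G)=\max_{\vec x\in\Delta}\lambda(G,\vec x)$ (the Lagrangian). A vector $\vec x\in\Delta$ with $\lambda(G,\vec x)=\lambda(G)$ is an optimal weight vector, and $x_v$ is the weight of vertex $v$. The link graph of $v$ is the $2$-graph $G_v=\{ab: vab\in E(G)\}$, and $\omega(\cdot)$ denotes the order of a maximum clique of a $2$-graph. $K_m^3$ is the complete $3$-graph on $m$ vertices. *)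

From mathcomp Require Import all_boot all_order all_algebra.
From mathcomp Require Import classical_sets reals.
Set Implicit Arguments. Unset Strict Implicit. Unset Printing Implicit Defensive.
Import Order.TTheory GRing.Theory Num.Theory.
Local Open Scope ring_scope.
Local Open Scope classical_set_scope.

Definition is_3graph (n : nat) (G : {set {set 'I_n}}) : Prop :=
  forall e, e \in G -> #|e| = 3%N.

Definition in_simplex (R : realType) (n : nat) (x : 'I_n -> R) : Prop :=
  (forall i, 0 <= x i <= 1) /\ \sum_(i < n) x i = 1.

Definition lagr_at (R : realType) (n : nat) (G : {set {set 'I_n}})
  (x : 'I_n -> R) : R :=
  \sum_(e in G) \prod_(i in e) x i.

(* lambda(G) = max over the simplex (taken as the supremum, which is attained). *)
Definition lagrangian (R : realType) (n : nat) (G : {set {set 'I_n}}) : R :=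
  sup [set lagr_at G x | x in [set x : 'I_n -> R | in_simplex x]].

Definition optimal_weight (R : realType) (n : nat) (G : {set {set 'I_n}})
  (x : 'I_n -> R) : Prop :=
  in_simplex x /\ lagr_at G x = lagrangian R G.

Definition complete3 (m : nat) : {set {set 'I_m}} :=
  [set e : {set 'I_m} | #|e| == 3%N]%SET.

(* S is a clique of the link graph G_v = {ab : vab in E(G)} *)
Definition link_clique (n : nat) (G : {set {set 'I_n}}) (v : 'I_n)
  (S : {set 'I_n}) : Prop :=
  forall a b, a \in S -> b \in S -> a != b -> ((v |: (a |: [set b])) \in G)%SET.

Definition link_clique_num_le (n : nat) (G : {set {set 'I_n}}) (v : 'I_n)
  (k : nat) : Prop :=
  forall S, link_clique G v S -> (#|S| <= k)%N.

From mathcomp Require Import all_boot all_order all_algebra.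
From mathcomp Require Import classical_sets reals.
From mathcomp Require Import ring lra.
Set Implicit Arguments. Unset Strict Implicit. Unset Printing Implicit Defensive.
Import Order.TTheory GRing.Theory Num.Theory.
Local Open Scope ring_scope.

(* Suppose x_v >= 1/(k+1) and let L = lambda(G_v, x).  As x is optimal and x_v > 0,
   shifting weight from v proportionally onto the other vertices cannot increase the
   Lagrangian; to first order this gives 3 lambda(G) <= L.  The link G_v has clique
   number at most k and carries total weight 1 - x_v <= k/(k+1), so by Motzkin-Straus
   L <= (1 - 1/k) (1 - x_v)^2 / 2 <= k (k-1) / (2 (k+1)^2), which is three times the
   value of K_{k+1}^3 at the uniform weighting.  Hence lambda(G) <= lambda(K_{k+1}^3). *)

Section PairSums.
Variables (R : realFieldType) (T : finType).
Implicit Types (P : {pred T}) (y : T -> R).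

Lemma sum_distinct_pairs P y :
  \sum_(a in P) \sum_(b in P | b != a) y a * y b =
  (\sum_(a in P) y a) ^+ 2 - \sum_(a in P) y a ^+ 2.
Proof.
rewrite expr2 mulr_suml -sumrB; apply: eq_bigr => a Pa.
by rewrite mulr_sumr [in RHS](bigD1 a) //= expr2 addrAC subrr add0r.
Qed.

Lemma sqr_sum_le_card P y :
  (\sum_(a in P) y a) ^+ 2 <= #|P|%:R * \sum_(a in P) y a ^+ 2.
Proof.
set S1 := \sum_(a in P) y a; set S2 := \sum_(a in P) y a ^+ 2.
have row a : \sum_(b in P) (y a - y b) ^+ 2 = #|P|%:R * y a ^+ 2 - (y a * S1) *+ 2 + S2.
  under eq_bigr do rewrite sqrrB.
  by rewrite big_split sumrB /= sumr_const sumrMnl -mulr_sumr mulr_natl.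
have : 0 <= \sum_(a in P) \sum_(b in P) (y a - y b) ^+ 2.
  by do 2![apply: sumr_ge0 => ? _]; apply: sqr_ge0.
rewrite (eq_bigr _ (fun a _ => row a)) big_split sumrB /= sumr_const sumrMnl.
rewrite -mulr_sumr -mulr_suml -/S1 -/S2 -expr2; lra.
Qed.

Lemma sum_indicator (P : pred T) c : \sum_(i | P i) (i == c)%:R = (P c)%:R :> R.
Proof.
rewrite big_mkcond (bigD1 c) //= eqxx big1 ?addr0; first by case: (P c).
by move=> i /negbTE ->; case: (P i).
Qed.

Lemma sum_indicatorM (F : T -> R) c : \sum_i (i == c)%:R * F i = F c.
Proof.
rewrite (bigD1 c) //= eqxx mul1r big1 ?addr0 // => i /negbTE ->.
by rewrite mul0r.
Qed.

Lemma sum_support y (F : T -> R) : (forall i, y i = 0 -> F i = 0) ->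
  \sum_i F i = \sum_(i in support y) F i.
Proof. by move=> F0; rewrite [RHS]big_rmcond // => i; rewrite inE negbK => /eqP/F0. Qed.

End PairSums.

Section AdjacencyForm.
Variables (R : realFieldType) (T : finType) (adj : rel T).
Hypotheses (adj_irr : irreflexive adj) (adj_sym : symmetric adj).
Implicit Types (y u : T -> R).

Definition adj_form y u := \sum_a \sum_(b | adj a b) y a * u b.

Lemma adj_form_shift y u t :
  adj_form (fun i => y i + t * u i) (fun i => y i + t * u i) =
  adj_form y y + t * (adj_form y u + adj_form u y) + t ^+ 2 * adj_form u u.
Proof.
rewrite /adj_form -big_split /= !mulr_sumr -!big_split /=; apply: eq_bigr => a _.
rewrite -big_split /= !mulr_sumr -!big_split /=; apply: eq_bigr => b _.
ring.
Qed.

Definition transfer a b : T -> R := fun i => (i == a)%:R - (i == b)%:R.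

Lemma sum_transfer a b : \sum_i transfer a b i = 0.
Proof. by rewrite sumrB !sum_indicator subrr. Qed.

Lemma adj_form_transfer a b : ~~ adj a b -> adj_form (transfer a b) (transfer a b) = 0.
Proof.
move=> nab; rewrite /adj_form.
under eq_bigr => i _ do rewrite -mulr_sumr sumrB !sum_indicator mulrBl.
rewrite sumrB !sum_indicatorM !adj_irr (negbTE nab) adj_sym (negbTE nab).
by rewrite subrr.
Qed.

(* The transfer direction has no quadratic term, so one of the two extreme transfers
   does not decrease the form, and it empties a or b. *)
Lemma adj_form_shrink_support y a b : (forall i, 0 <= y i) ->
    a \in support y -> b \in support y -> a != b -> ~~ adj a b ->
  exists y' : T -> R, [/\ forall i, 0 <= y' i, \sum_i y' i = \sum_i y i,
    adj_form y y <= adj_form y' y' & (#|support y'| < #|support y|)%N].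
Proof.
move=> y_ge0 ya yb nab nadj.
pose u := transfer a b; pose y_ t i := y i + t * u i.
have ua : u a = 1 by rewrite /u /transfer eqxx (negbTE nab) subr0.
have ub : u b = -1 by rewrite /u /transfer eqxx eq_sym (negbTE nab) sub0r.
have u0 i : i != a -> i != b -> u i = 0.
  by rewrite /u /transfer => /negbTE -> /negbTE ->; rewrite subrr.
have sum_y_ t : \sum_i y_ t i = \sum_i y i.
  by rewrite big_split /= -mulr_sumr sum_transfer mulr0 addr0.
have y__ge0 t : - y a <= t <= y b -> forall i, 0 <= y_ t i.
  case/andP=> ta tb i; rewrite /y_.
  have [-> | ia] := eqVneq i a; first by rewrite ua; lra.
  have [-> | ib] := eqVneq i b; first by rewrite ub; lra.
  by rewrite u0 // mulr0 addr0.
have support_y_ t c : c \in support y -> y_ t c = 0 ->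
    (#|support (y_ t)| < #|support y|)%N.
  move=> yc y_c; rewrite [X in (_ < X)%N](cardD1 c) yc add1n ltnS.
  apply: subset_leq_card; apply/fintype.subsetP => i; rewrite !inE => y_i.
  apply/andP; split; first by apply: contraNneq y_i => ->; rewrite y_c.
  have [-> | ia] := eqVneq i a; first by rewrite inE in ya.
  have [-> | ib] := eqVneq i b; first by rewrite inE in yb.
  by move: y_i; rewrite /y_ u0 // mulr0 addr0.
have Q_y_ t : adj_form (y_ t) (y_ t) =
    adj_form y y + t * (adj_form y u + adj_form u y).
  by rewrite adj_form_shift adj_form_transfer // mulr0 addr0.
have ya0 := y_ge0 a; have yb0 := y_ge0 b.
have [D_ge0 | D_lt0] := lerP 0 (adj_form y u + adj_form u y).
- exists (y_ (y b)); split => //; first by apply: y__ge0; lra.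
  + by rewrite Q_y_ lerDl mulr_ge0.
  + by apply: (support_y_ _ b) => //; rewrite /y_ ub; ring.
- exists (y_ (- y a)); split => //; first by apply: y__ge0; lra.
  + by rewrite Q_y_ lerDl; nra.
  + by apply: (support_y_ _ a) => //; rewrite /y_ ua; ring.
Qed.

Lemma adj_form_le_distinct_pairs y : (forall i, 0 <= y i) ->
  adj_form y y <= (\sum_i y i) ^+ 2 - \sum_i y i ^+ 2.
Proof.
move=> y_ge0; rewrite -(sum_distinct_pairs predT); apply: ler_sum => a _.
rewrite [leRHS]big_mkcond [leLHS]big_mkcond; apply: ler_sum => b _ /=.
have [ab | _] := boolP (adj a b); last by case: ifP => // _; apply: mulr_ge0.
by have -> : b != a by apply: contraTneq ab => ->; rewrite adj_irr.
Qed.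

Lemma adj_form_support_bound (k : nat) y : (forall i, 0 <= y i) ->
  (#|support y| <= k)%N -> adj_form y y * k%:R <= (k%:R - 1) * (\sum_i y i) ^+ 2.
Proof.
move=> y_ge0 yk.
have Q_le := adj_form_le_distinct_pairs y_ge0.
rewrite (sum_support (y := y) (F := y)) // in Q_le *.
rewrite (sum_support (y := y) (F := fun i => y i ^+ 2)) in Q_le;
  last by move=> i ->; rewrite expr0n.
have CS := sqr_sum_le_card (support y) y.
have kS : #|support y|%:R <= k%:R :> R by rewrite ler_nat.
have S2_ge0 : 0 <= \sum_(i in support y) y i ^+ 2.
  by apply: sumr_ge0 => i _; apply: sqr_ge0.
have := ler_wpM2r (ler0n _ k) Q_le; have := ler_wpM2r S2_ge0 kS; nra.
Qed.

Theorem Motzkin_Straus_adj (k : nat) y :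
  (forall S : {set T}, {in S &, forall a b, a != b -> adj a b} -> (#|S| <= k)%N) ->
  (forall i, 0 <= y i) -> adj_form y y * k%:R <= (k%:R - 1) * (\sum_i y i) ^+ 2.
Proof.
move=> clique_le; have [N] := ubnP #|support y|; elim: N y => // N IH y.
rewrite ltnS => yN y_ge0.
pose nonadjacent (p : T * T) :=
  [&& p.1 \in support y, p.2 \in support y, p.1 != p.2 & ~~ adj p.1 p.2].
case: (pickP nonadjacent) => [[a b] /and4P[/= ya yb nab nadj] | clique].
  have [y' [y'_ge0 sum_y' Q_le y'_lt]] :=
    adj_form_shrink_support y_ge0 ya yb nab nadj.
  rewrite -sum_y'; apply: le_trans (IH _ (leq_trans y'_lt yN) y'_ge0).
  by rewrite ler_wpM2r.
apply: adj_form_support_bound => //; rewrite -cardsE; apply: clique_le => a b.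
rewrite !inE => ya yb nab; apply: contraFT (clique (a, b)) => nadj.
by rewrite /nonadjacent /= !inE ya yb nab.
Qed.

End AdjacencyForm.

Section TwoGraphs.
Variables (R : realFieldType) (T : finType).
Implicit Types (E : {set {set T}}) (f : {set T}) (y : T -> R).

Lemma eq_set2_card2 f a b : #|f| = 2 ->
  ([set a; b] == f) = [&& a \in f, b \in f & a != b].
Proof.
move=> f2; apply/idP/and3P => [/eqP def_f | [af bf nab]].
  by move: f2; rewrite -def_f cards2 set21 set22; case: (a != b).
rewrite eqEcard cards2 nab f2 andbT.
by apply/fintype.subsetP => i; rewrite !inE => /orP[] /eqP ->.
Qed.

Lemma sum_pairs_card2 f y : #|f| = 2 ->
  \sum_a \sum_b (if [set a; b] == f then y a * y b else 0) = (\prod_(i in f) y i) *+ 2.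
Proof.
move=> f2; have -> : \sum_a \sum_b (if [set a; b] == f then y a * y b else 0) =
    \sum_(a in f) \sum_(b in f | b != a) y a * y b.
  rewrite [RHS]big_mkcond; apply: eq_bigr => a _.
  under eq_bigr => b _ do rewrite eq_set2_card2 // [a == b]eq_sym.
  by case: (a \in f); rewrite /= ?big1_eq // [RHS]big_mkcond.
rewrite sum_distinct_pairs; move/eqP/cards2P: f2 => [c [d [ncd ->]]].
rewrite !big_setU1 ?inE //= !big_set1; ring.
Qed.

Lemma adj_form_card2 E y : (forall f, f \in E -> #|f| = 2) ->
  adj_form (fun a b => [set a; b] \in E) y y = (\sum_(f in E) \prod_(i in f) y i) *+ 2.
Proof.
move=> E2; rewrite /adj_form.
have edge a b : (if [set a; b] \in E then y a * y b else 0) =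
    \sum_(f in E) (if [set a; b] == f then y a * y b else 0).
  rewrite -big_mkcondr; case: ifP => abE.
    rewrite (big_pred1 [set a; b]) // => f /=.
    by rewrite eq_sym; case: eqP => [-> | _]; rewrite ?abE ?andbF.
  by rewrite big_pred0 // => f; apply: contraFF abE => /andP[fE /eqP ->].
under eq_bigr => a _ do rewrite big_mkcond (eq_bigr _ (fun b _ => edge a b)).
under eq_bigr => a _ do rewrite exchange_big.
rewrite exchange_big -sumrMnl; apply: eq_bigr => f fE /=.
exact: sum_pairs_card2 (E2 f fE).
Qed.

Theorem Motzkin_Straus E (k : nat) y : (forall f, f \in E -> #|f| = 2) ->
    (forall S : {set T},
      {in S &, forall a b, a != b -> [set a; b] \in E} -> (#|S| <= k)%N) ->
    (forall i, 0 <= y i) ->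
  (\sum_(f in E) \prod_(i in f) y i) *+ 2 * k%:R <= (k%:R - 1) * (\sum_i y i) ^+ 2.
Proof.
move=> E2 clique_le y_ge0; rewrite -adj_form_card2 //.
apply: Motzkin_Straus_adj => // [a | a b /=]; last by rewrite finset.setUC.
by apply/negP => /E2; rewrite finset.setUid cards1.
Qed.

End TwoGraphs.

Lemma le0_of_le_linear (R : realFieldType) (a c t0 : R) : 0 < t0 -> 0 <= c ->
  (forall t, 0 < t <= t0 -> a <= c * t) -> a <= 0.
Proof.
move=> t0_gt0 c_ge0 a_le; apply/ler_addgt0Pr => e e_gt0; rewrite add0r.
have c1_gt0 : 0 < c + 1 by lra.
pose t := Num.min t0 (e / (c + 1)).
have t_gt0 : 0 < t by rewrite lt_min t0_gt0 divr_gt0.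
have t_le : t <= e / (c + 1) by rewrite ge_min lexx orbT.
apply: (le_trans (a_le t _)); first by rewrite t_gt0 ge_min lexx.
apply: (le_trans (ler_wpM2l c_ge0 t_le)).
by rewrite mulrA ler_pdivrMr //; nra.
Qed.

Lemma prod_rescale (R : comPzSemiRingType) (T : finType) (A : {pred T}) v
    (x z : T -> R) r :
  v \notin A -> (forall i, i != v -> z i = r * x i) ->
  \prod_(i in A) z i = r ^+ #|A| * \prod_(i in A) x i.
Proof.
move=> vA z_x; rewrite -prodr_const -big_split /=; apply: eq_bigr => i iA.
by apply: z_x; apply: contraNneq vA => <-.
Qed.

Section ThreeGraphs.
Variables (R : realType) (n : nat).
Implicit Types (G H : {set {set 'I_n}}) (v : 'I_n) (x z : 'I_n -> R).

Lemma in_simplexP x : (forall i, 0 <= x i) -> \sum_i x i = 1 -> in_simplex x.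
Proof.
move=> x_ge0 sum_x; split=> // i; rewrite x_ge0 -sum_x (bigD1 i) //= lerDl.
exact: sumr_ge0.
Qed.

Lemma lagr_at_ge0 H x : (forall i, 0 <= x i) -> 0 <= lagr_at H x.
Proof. by move=> x_ge0; apply: sumr_ge0 => e _; apply: prodr_ge0. Qed.

Lemma lagr_at_le_card H x : in_simplex x -> lagr_at H x <= #|H|%:R.
Proof.
move=> [x01 _]; rewrite /lagr_at -sumr_const; apply: ler_sum => e _.
by apply: prodr_ile1 => i _; apply: x01.
Qed.

Lemma lagr_at_le_lagrangian H x : in_simplex x -> lagr_at H x <= lagrangian R H.
Proof.
move=> x_simplex; apply: ub_le_sup; last by exists x.
by exists #|H|%:R => _ [y y_simplex <-]; apply: lagr_at_le_card.
Qed.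

Lemma lagr_at_rescale H v (d : nat) x z r :
  (forall e, e \in H -> (v \notin e) && (#|e| == d)) ->
  (forall i, i != v -> z i = r * x i) ->
  lagr_at H z = r ^+ d * lagr_at H x.
Proof.
move=> H_d z_x; rewrite /lagr_at mulr_sumr; apply: eq_bigr => e /H_d /andP[ve /eqP <-].
by apply: prod_rescale ve z_x.
Qed.

Definition link G v := [set e :\ v | e in G & v \in e].
Definition del_vertex G v := [set e in G | v \notin e].

Lemma lagr_at_split G v x :
  lagr_at G x = x v * lagr_at (link G v) x + lagr_at (del_vertex G v) x.
Proof.
rewrite /lagr_at (bigID (fun e : {set 'I_n} => v \in e)) /= big_imset /=; last first.
  move=> e1 e2; rewrite !inE => /andP[_ v1] /andP[_ v2] e12.
  by rewrite -(finset.setD1K v1) e12 finset.setD1K.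
congr (_ + _); last by apply: eq_bigl => e; rewrite inE.
rewrite mulr_sumr; apply: eq_big => [e | e /andP[_ ve]]; first by rewrite inE.
by rewrite (bigD1 v) //=; congr (_ * _); apply: eq_bigl => i; rewrite in_setD1 andbC.
Qed.

Lemma link_edge G v : is_3graph G ->
  forall f, f \in link G v -> (v \notin f) && (#|f| == 2).
Proof.
move=> G3 f /imsetP[e]; rewrite inE => /andP[eG ve] ->.
by rewrite setD11; have := cardsD1 v e; rewrite G3 // ve add1n => -[<-].
Qed.

Lemma del_vertex_edge G v : is_3graph G ->
  forall e, e \in del_vertex G v -> (v \notin e) && (#|e| == 3).
Proof. by move=> G3 e; rewrite inE => /andP[eG ->]; rewrite G3. Qed.

Lemma set2_link G v a b : [set a; b] \in link G v -> v |: [set a; b] \in G.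
Proof.
by case/imsetP=> e; rewrite inE => /andP[eG ve] ->; rewrite finset.setD1K.
Qed.

Lemma lagrangian_le_link G v x : is_3graph G -> optimal_weight G x -> 0 < x v ->
  3 * lagrangian R G <= lagr_at (link G v) x.
Proof.
move=> G3 [[x01 sum_x] x_opt] xv_gt0.
have x_ge0 i : 0 <= x i by case/andP: (x01 i).
have xv_le1 : x v <= 1 by case/andP: (x01 v).
set s := x v in xv_gt0 xv_le1 *; set L := lagr_at (link G v) x.
set M := lagr_at (del_vertex G v) x; set lam := lagrangian R G in x_opt *.
have lamE : lam = s * L + M by rewrite -x_opt (lagr_at_split _ v).
have L_ge0 : 0 <= L by apply: lagr_at_ge0.
have lam_ge0 : 0 <= lam by rewrite -x_opt; apply: lagr_at_ge0.
have sum_off : \sum_(i | i != v) x i = 1 - s.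
  by rewrite -sum_x [in RHS](bigD1 v) //= -/s addrAC subrr add0r.
(* [z t] scales the weights off v by 1 + t; it gains t (3 lam - L) + O(t^2) over x. *)
pose z t i := if i == v then s - t * (1 - s) else (1 + t) * x i.
have z_off t i : i != v -> z t i = (1 + t) * x i by rewrite /z => /negbTE ->.
have z_simplex t : 0 <= t <= s -> in_simplex (z t).
  case/andP=> t_ge0 t_le; apply: in_simplexP => [i | ].
    by rewrite /z; case: eqP => _; [nra | apply: mulr_ge0; [lra | apply: x_ge0]].
  rewrite (bigD1 v) //= (eq_bigr _ (fun i => z_off t i)) -mulr_sumr sum_off.
  by rewrite /z eqxx; ring.
have lagr_z t : lagr_at G (z t) = (s - t * (1 - s)) * ((1 + t) ^+ 2 * L) + (1 + t) ^+ 3 * M.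
  rewrite (lagr_at_split _ v) (lagr_at_rescale (link_edge G3) (z_off t)).
  by rewrite (lagr_at_rescale (del_vertex_edge G3) (z_off t)) /z eqxx.
rewrite -subr_le0; apply: (@le0_of_le_linear _ _ (3 * L) s) => // [|t /andP[t_gt0 t_le]].
  by rewrite mulr_ge0.
have z_le : lagr_at G (z t) <= lam.
  by apply: lagr_at_le_lagrangian (z_simplex _ _); rewrite ltW.
have gain_le0 : (3 * lam - L) + t * (3 * lam - 2 * L) + t ^+ 2 * (lam - L) <= 0.
  rewrite -(pmulr_rle0 _ t_gt0).
  have -> : t * ((3 * lam - L) + t * (3 * lam - 2 * L) + t ^+ 2 * (lam - L)) =
      lagr_at G (z t) - lam by rewrite lagr_z lamE; ring.
  by rewrite subr_le0.
have t_le1 : t <= 1 by lra.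
nra.
Qed.

Lemma lagr_link_le G v (k : nat) x : is_3graph G -> link_clique_num_le G v k ->
  in_simplex x -> lagr_at (link G v) x *+ 2 * k%:R <= (k%:R - 1) * (1 - x v) ^+ 2.
Proof.
move=> G3 clique_le [x01 sum_x].
pose y i := if i == v then 0 else x i.
have y_off i : i != v -> y i = 1 * x i by rewrite /y mul1r => /negbTE ->.
have -> : lagr_at (link G v) x = lagr_at (link G v) y.
  by rewrite (lagr_at_rescale (link_edge G3) y_off) expr1n mul1r.
have -> : 1 - x v = \sum_i y i.
  rewrite -sum_x (bigD1 v) //= [in RHS](bigD1 v) //= /y eqxx add0r addrAC subrr add0r.
  by apply: eq_bigr => i /negbTE ->.
apply: Motzkin_Straus => [f /(link_edge G3) /andP[_ /eqP] // | S S_clique | i].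
  by apply: clique_le => a b aS bS nab; apply: set2_link; apply: S_clique.
by rewrite /y; case: eqP => // _; case/andP: (x01 i).
Qed.

Lemma lagr_link_le_heavy G v (k : nat) x : (0 < k)%N -> is_3graph G ->
    link_clique_num_le G v k -> in_simplex x -> k.+1%:R^-1 <= x v ->
  2 * k.+1%:R ^+ 2 * lagr_at (link G v) x <= k%:R * (k%:R - 1).
Proof.
move=> k_gt0 G3 clique_v x_simplex xv_ge.
have MS := lagr_link_le G3 clique_v x_simplex; rewrite -mulr_natl in MS.
have xv_le1 : x v <= 1 by case/andP: (x_simplex.1 v).
have k_ge1 : 1 <= k%:R :> R by rewrite ler1n.
rewrite -div1r ler_pdivrMr ?ltr0n // -natr1 in xv_ge; rewrite -natr1.
set a := k%:R in k_ge1 xv_ge MS *; set L := lagr_at _ x in MS *.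
have one_sub : 0 <= (a + 1) * (1 - x v) <= a by apply/andP; split; nra.
have one_sub_sqr : ((a + 1) * (1 - x v)) ^+ 2 <= a ^+ 2 by nra.
rewrite -(ler_pM2l (_ : 0 < a)); last lra.
nra.
Qed.

End ThreeGraphs.

Lemma binomial3_natr (R : comPzRingType) (m : nat) :
  'C(m, 3)%:R * 6 = m%:R * (m%:R - 1) * (m%:R - 2) :> R.
Proof.
case: m => [|[|[|m]]]; try by rewrite bin_small // mul0r; ring.
have := bin_ffact m.+3 3; rewrite !ffactnS ffactn0 /= muln1 => C3.
by rewrite -natrM C3 !natrM -!natr1; ring.
Qed.

Lemma lagrangian_complete3_ge (R : realType) (m : nat) : (0 < m)%N ->
  (m%:R - 1) * (m%:R - 2) <= 6 * m%:R ^+ 2 * lagrangian R (complete3 m).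
Proof.
move=> m_gt0; have m_gt0R : 0 < m%:R :> R by rewrite ltr0n.
pose c : R := m%:R^-1.
have c_simplex : in_simplex (fun _ : 'I_m => c).
  apply: in_simplexP => [i | ]; first by rewrite invr_ge0 ler0n.
  by rewrite sumr_const card_ord -mulr_natr mulVf ?gt_eqF.
rewrite -ler_pdivrMl ?mulr_gt0 ?exprn_gt0 //.
apply: le_trans (lagr_at_le_lagrangian _ c_simplex).
rewrite /lagr_at (eq_bigr (fun _ => c ^+ 3)) => [|e]; last first.
  by rewrite inE => /eqP e3; rewrite prodr_const e3.
have C3 : 'C(m, 3)%:R = m%:R * (m%:R - 1) * (m%:R - 2) / 6 :> R.
  by rewrite -binomial3_natr mulfK // pnatr_eq0.
rewrite sumr_const card_draws card_ord -[c ^+ 3 *+ _]mulr_natr C3 /c.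
rewrite le_eqVlt; apply/orP; left; apply/eqP; field.
by rewrite gt_eqF.
Qed.

Theorem claim3p2 (R : realType) (k n : nat) (G : {set {set 'I_n}})
  (x : 'I_n -> R) :
  (0 < k)%N ->
  is_3graph G ->
  lagrangian R (complete3 k.+1) < lagrangian R G ->
  optimal_weight G x ->
  forall v : 'I_n, link_clique_num_le G v k -> x v < (k.+1)%:R^-1.
Proof.
move=> k_gt0 G3 lt_K_G x_opt v clique_v; rewrite ltNge; apply/negP => xv_ge.
have xv_gt0 : 0 < x v by apply: lt_le_trans xv_ge; rewrite invr_gt0 ltr0n.
have first_order := lagrangian_le_link G3 x_opt xv_gt0.
have link_le := lagr_link_le_heavy k_gt0 G3 clique_v x_opt.1 xv_ge.
have K_ge := lagrangian_complete3_ge R (ltn0Sn k).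
have k1_gt0 : 0 < k.+1%:R ^+ 2 :> R by rewrite exprn_gt0 // ltr0n.
rewrite -natr1 in K_ge k1_gt0 link_le.
nra.
Qed.
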